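(* Let $(X,d)$ be a compact metric space and let $f:X\to X$ be a continuous map. Then there is no closed set $J\subseteq CR_f$ such that the poset $(J/E,\preceq)$ is linearly and densely ordered. In particular, the chain components poset $(\mathfrak{C}_f,\preceq)$ is not linearly and densely ordered.
   Context: Let $(X,d)$ be a metric space and $f:X\to X$ a map. For $\varepsilon>0$ and $x,y\in X$, an $\varepsilon$-chain from $x$ to $y$ is a finite sequence $x_0=x,x_1,\dots,x_n=y$ with $n\ge 1$ and $d(f(x_i),x_{i+1})<\varepsilon$ for $i=0,\dots,n-1$. Write $x\,\mathcal{C}\,y$ if for every $\varepsilon>0$ there is an $\varepsilon$-chain from $x$ to $y$. The chain recurrent set is $CR_f=\{x\in X: x\,\mathcal{C}\,x\}$. On $CR_f$ define the equivalence relation $x\,E\,y$ iff $x\,\mathcal{C}\,y$ and $y\,\mathcal{C}\,x$; the equivalence classes are the chain components, and $\mathfrak{C}_f=CR_f/E$. The partial order on chain components is $[x]\preceq[y]$ iff $y\,\mathcal{C}\,x$; $(\mathfrak{C}_f,\preceq)$ is the chain components poset. For $J\subseteq CR_f$, $J/E$ denotes the set of $E$-classes of points of $J$ (i.e. $E$ restricted to $J$), ordered by the same rule $[x]\preceq[y]$ iff $y\,\mathcal{C}\,x$. A poset is densely ordered if it has at least two elements and for every $a<b$ there is $c$ with $a<c<b$ (so a densely ordered poset is infinite). *)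

From HB Require Import structures.
From mathcomp Require Import all_boot all_order all_algebra.
From mathcomp Require Import all_classical all_reals topology.
Set Implicit Arguments. Unset Strict Implicit. Unset Printing Implicit Defensive.
Import Order.TTheory GRing.Theory Num.Theory.
Local Open Scope classical_set_scope.
Local Open Scope ring_scope.

Section ChainDefs.
Context {R : realType} {X : metricType R}.

Definition eps_chain (f : X -> X) (eps : R) (x y : X) : Prop :=
  exists (n : nat) (s : nat -> X), (1 <= n)%N /\ s 0%N = x /\ s n = y /\
    forall i : nat, (i < n)%N -> mdist (f (s i)) (s i.+1) < eps.

Definition chain_rel (f : X -> X) (x y : X) : Prop :=
  forall eps : R, 0 < eps -> eps_chain f eps x y.

Definition CR (f : X -> X) : set X := [set x | chain_rel f x x].

Definition chainE (f : X -> X) (x y : X) : Prop := chain_rel f x y /\ chain_rel f y x.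

(* order on classes, via representatives: [x] <= [y] iff y C x *)
Definition cle (f : X -> X) (x y : X) : Prop := chain_rel f y x.
Definition clt (f : X -> X) (x y : X) : Prop := cle f x y /\ ~ chainE f x y.

Definition quot_lin_dense (f : X -> X) (J : set X) : Prop :=
  (* at least two elements (two distinct classes) *)
  (exists x y, J x /\ J y /\ ~ chainE f x y) /\
  (forall x y, J x -> J y -> cle f x y \/ cle f y x) /\
  (forall x y, J x -> J y -> clt f x y ->
     exists z, J z /\ clt f x z /\ clt f z y).

End ChainDefs.

(* If J/E has two classes, there are x, y in J with not x C y, hence an eps with no
   eps-chain from x to y.  As the points of J are chain recurrent, J splits into the
   two closed pieces U (points eps-reachable from x) and V (the others).  By
   compactness and linearity U has a largest class [u] and V a smallest class [v];
   then [u] < [v] and no class of J lies strictly between them. *)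
From HB Require Import structures.
From mathcomp Require Import all_boot all_order all_algebra.
From mathcomp Require Import all_classical all_reals topology.
From mathcomp Require Import lra.
Import Order.TTheory GRing.Theory Num.Theory.
Import metricType_numDomainType.
Local Open Scope classical_set_scope.
Local Open Scope ring_scope.

Lemma compact_preorder_max {T : topologicalType} {K : set T} {r : T -> T -> Prop} :
  compact K -> K !=set0 ->
  (forall a, K a -> r a a) ->
  (forall a b c, r a b -> r b c -> r a c) ->
  (forall a b, K a -> K b -> r a b \/ r b a) ->
  (forall a, closed [set b | r a b]) ->
  exists2 p, K p & forall a, K a -> r a p.
Proof.
move=> cK [a0 Ka0] refl trans total clr.
pose up a := K `&` [set b | r a b].
have F_filter : Filter (filter_from K up).
  apply: filter_from_filter; first by exists a0.
  move=> a b Ka Kb; have [rab|rba] := total a b Ka Kb.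
    by exists b => // c [Kc rbc]; split; split => //; apply: trans rbc.
  by exists a => // c [Kc rac]; split; split => //; apply: trans rac.
have F_proper : ProperFilter (filter_from K up).
  by apply: filter_from_proper => a Ka; exists a; split => //; apply: refl.
have F_K : filter_from K up K by exists a0 => // b [].
have [p [Kp clp]] := cK _ F_proper F_K.
exists p => // a Ka; apply: (clr a); apply: (closureS (@subIsetr _ K _)).
by move: clp; rewrite clusterE; apply; exists a.
Qed.

Section MetricClosure.
Context {R : realType} {X : metricType R}.

Lemma closure_mdist {A : set X} {x} :
  closure A x -> forall d, 0 < d -> exists2 y, A y & mdist x y < d.
Proof.
move=> cx d d0; have [y [Ay]] := cx (ball x d) (nbhsx_ballx _ _ d0).
by rewrite ballEmdist; exists y.
Qed.

End MetricClosure.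

Section EpsChains.
Context {R : realType} {X : metricType R} {f : X -> X}.

Lemma eps_chain_le {e1 e2 : R} {x y} :
  eps_chain f e1 x y -> e1 <= e2 -> eps_chain f e2 x y.
Proof.
move=> [n [s [n1 [s0 [sn hs]]]]] le12; exists n, s; do 3 (split => //).
by move=> i /hs /lt_le_trans; apply.
Qed.

Lemma eps_chain_trans {e : R} {x y z} :
  eps_chain f e x y -> eps_chain f e y z -> eps_chain f e x z.
Proof.
move=> [n [s [n1 [s0 [sn hs]]]]] [m [t [m1 [t0 [tm ht]]]]].
pose st i := if (i <= n)%N then s i else t (i - n)%N.
have stE i : (n <= i)%N -> st i = t (i - n)%N.
  rewrite /st; case: ifP => // iln ni.
  have -> : i = n by apply/eqP; rewrite eqn_leq iln.
  by rewrite subnn t0 sn.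
exists (n + m)%N, st; split; first by rewrite (leq_trans n1) // leq_addr.
split; first by rewrite /st leq0n.
split; first by rewrite stE ?leq_addr // addKn.
move=> i ilt; have [iln|nli] := ltnP i n.
  by rewrite /st (ltnW iln) iln; apply: hs.
rewrite !stE ?(leq_trans nli) // subSn //.
by apply: ht; rewrite ltn_subLR // addnC.
Qed.

Lemma chain_rel_trans {x y z} :
  chain_rel f x y -> chain_rel f y z -> chain_rel f x z.
Proof. by move=> cxy cyz e e0; apply: eps_chain_trans (cxy e e0) (cyz e e0). Qed.

Lemma eps_chain_perturb x y {e : R} {x' y'} : eps_chain f e x' y' ->
  eps_chain f (mdist (f x) (f x') + e + mdist y' y) x y.
Proof.
move=> [n [s [n1 [<- [<- hs]]]]].
pose s' i := if i == 0%N then x else if i == n then y else s i.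
have n0 : (n == 0%N) = false by case: n n1 {hs s'}.
exists n, s'; split => //; split; first by rewrite /s' eqxx.
split; first by rewrite /s' n0 eqxx.
move=> i ilt.
have head : mdist (f (s' i)) (f (s i)) <= mdist (f x) (f (s 0%N)).
  rewrite /s'; case: eqP => [->|_] //.
  by rewrite (ltn_eqF ilt) mdistxx mdist_ge0.
have tail : mdist (s i.+1) (s' i.+1) <= mdist (s n) y.
  by rewrite /s' /=; case: eqP => [<-|_] //; rewrite mdistxx mdist_ge0.
apply: le_lt_trans (metric_triangle _ (f (s i)) _) _; rewrite -addrA.
apply: ler_ltD head _; apply: le_lt_trans (metric_triangle _ (s i.+1) _) _.
exact: ltr_leD (hs i ilt) tail.
Qed.

Lemma CR_eps_chain {e : R} {z w} :
  CR f z -> mdist z w < e / 2 -> eps_chain f e z w.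
Proof.
move=> CRz zw; have e0 : 0 < e / 2 by apply: le_lt_trans zw; apply: mdist_ge0.
apply: (eps_chain_le (eps_chain_perturb z w (CRz _ e0))).
rewrite mdistxx add0r; lra.
Qed.

End EpsChains.

Section ContinuousMap.
Context {R : realType} {X : metricType R} (f : X -> X).
Hypothesis f_cont : continuous f.

Lemma chain_rel_approx x y :
  (forall d, 0 < d ->
     exists x' y', [/\ mdist x x' < d, mdist y y' < d & chain_rel f x' y']) ->
  chain_rel f x y.
Proof.
move=> approx e e0; have e3 : 0 < e / 3 by rewrite divr_gt0.
have [d d0 fx_near] := (nbhs_mdistP _ _).1 (cvgr_dist_lt (f_cont x) e3).
have d3 : 0 < Num.min d (e / 3) by rewrite lt_min d0 e3.
have [x' [y' [xx' yy' cx'y']]] := approx _ d3.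
apply: (eps_chain_le (eps_chain_perturb x y (cx'y' _ e3))).
move: xx' yy'; rewrite !lt_min (metric_sym y) => /andP[xx' _] /andP[_ yy'].
have := fx_near x' xx'; rewrite /=; lra.
Qed.

Lemma closed_chain_rel_from z : closed [set w | chain_rel f z w].
Proof.
move=> w /closure_mdist cw; apply: chain_rel_approx => d d0.
by have [w' zw' ww'] := cw d d0; exists z, w'; rewrite mdistxx.
Qed.

Lemma closed_chain_rel_to z : closed [set w | chain_rel f w z].
Proof.
move=> w /closure_mdist cw; apply: chain_rel_approx => d d0.
by have [w' w'z ww'] := cw d d0; exists w', z; rewrite mdistxx.
Qed.

Lemma closed_CR : closed (CR f).
Proof.
move=> w /closure_mdist cw; apply: chain_rel_approx => d d0.
by have [w' CRw' ww'] := cw d d0; exists w', w'.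
Qed.

End ContinuousMap.

Section ChainRecurrentSubset.
Context {R : realType} {X : metricType R} {f : X -> X} {J : set X}.
Hypotheses (J_closed : closed J) (J_CR : J `<=` CR f).

Lemma closed_eps_reachable {e : R} x :
  0 < e -> closed (J `&` [set z | eps_chain f e x z]).
Proof.
move=> e0 z clz.
have Jz : J z by apply: J_closed; move: clz; apply: closureS; apply: subIsetl.
have [w [Jw /= xw] zw] := closure_mdist clz _ (divr_gt0 e0 (ltr0n _ 2)).
split => //=; apply: eps_chain_trans xw (CR_eps_chain (J_CR _ Jw) _).
by rewrite metric_sym.
Qed.

Lemma closed_eps_unreachable {e : R} x :
  0 < e -> closed (J `&` ~` [set z | eps_chain f e x z]).
Proof.
move=> e0 z clz.
have Jz : J z by apply: J_closed; move: clz; apply: closureS; apply: subIsetl.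
have [w [Jw nxw] zw] := closure_mdist clz _ (divr_gt0 e0 (ltr0n _ 2)).
by split => // xz; apply/nxw/(eps_chain_trans xz)/(CR_eps_chain (J_CR _ Jz)).
Qed.

Hypotheses (X_compact : compact [set: X]) (f_cont : continuous f).
Hypothesis J_total : forall a b, J a -> J b -> cle f a b \/ cle f b a.

Lemma chain_classes_gap {x y} : J x -> J y -> ~ chain_rel f x y ->
  exists u v, [/\ J u, J v, clt f u v & forall z, J z -> clt f u z -> ~ clt f z v].
Proof.
move=> Jx Jy nxy.
have [e e0 nexy] : exists2 e, 0 < e & ~ eps_chain f e x y.
  by move/existsNP: nxy => [e /not_implyP[e0 nexy]]; exists e.
pose U := J `&` [set z | eps_chain f e x z].
pose V := J `&` ~` [set z | eps_chain f e x z].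
have compact_closed_subset (A : set X) : closed A -> compact A.
  by move=> A_closed; apply: subclosed_compact A_closed X_compact _.
have [u Uu u_max] : exists2 u, U u & forall z, U z -> cle f z u.
  apply: (compact_preorder_max
    (compact_closed_subset _ (closed_eps_reachable x e0))).
  - by exists x; split => //; apply: J_CR.
  - by move=> a [/J_CR].
  - by move=> a b c ab bc; apply: chain_rel_trans bc ab.
  - by move=> a b [Ja _] [Jb _]; apply: J_total.
  - exact: closed_chain_rel_to.
have [v Vv v_min] : exists2 v, V v & forall z, V z -> cle f v z.
  apply: (compact_preorder_max (r := fun a b => cle f b a)
    (compact_closed_subset _ (closed_eps_unreachable x e0))).
  - by exists y.
  - by move=> a [/J_CR].
  - by move=> a b c; apply: chain_rel_trans.
  - by move=> a b [Ja _] [Jb _]; apply: J_total.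
  - exact: closed_chain_rel_from.
have nuv : ~ chain_rel f u v.
  by move=> uv; apply: Vv.2; apply: eps_chain_trans Uu.2 (uv e e0).
exists u, v; split; [exact: Uu.1 | exact: Vv.1 | split | ].
- by have [|/nuv] := J_total _ _ Uu.1 Vv.1.
- by case.
move=> z Jz [zu nEuz] [vz nEzv].
have [xz|nxz] := pselect (eps_chain f e x z).
  by apply: nEuz; split => //; apply: u_max.
by apply: nEzv; split => //; apply: v_min.
Qed.

End ChainRecurrentSubset.

Theorem theorem2p1 (R : realType) (X : metricType R) (f : X -> X) :
  compact [set: X] -> continuous f ->
  (forall J : set X, closed J -> J `<=` CR f -> ~ quot_lin_dense f J) /\
  ~ quot_lin_dense f (CR f).
Proof.
move=> X_compact f_cont.
have no_lin_dense J : closed J -> J `<=` CR f -> ~ quot_lin_dense f J.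
  move=> J_closed J_CR [[a [b [Ja [Jb nEab]]]] [J_total J_dense]].
  have [x [y [Jx Jy nxy]]] : exists x y, [/\ J x, J y & ~ chain_rel f x y].
    have [ab|nab] := pselect (chain_rel f a b); last by exists a, b.
    by exists b, a; split => // ba; apply: nEab.
  have [u [v [Ju Jv uv gap]]] :=
    chain_classes_gap J_closed J_CR X_compact f_cont J_total Jx Jy nxy.
  have [z [Jz [uz zv]]] := J_dense u v Ju Jv uv.
  exact: gap z Jz uz zv.
by split => //; apply: no_lin_dense => //; apply: closed_CR.
Qed.
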